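(* There is an absolute constant $c>0$ such that the following holds. Let $G$ be a finite abelian group, let $B \subset G$ be a regular Bohr set and let $A \subset B$ be a set of relative density $\alpha> 0$. Let $\lambda \in [0,1]$, and suppose $T \subset B_\tau$ is nonempty, where $\tau \le c\lambda^2/\mathrm{rk}(B)$. If \[ \mu_A*1_A*\mu_T*\mu_T(x) \leq (1-2\lambda^2)\alpha \] for some $x \in B_\tau$, then $\|1_A*\mu_T\|_\infty \geq (1+\lambda)\alpha$.
   Context: $f*g(x)=\sum_{y} f(y)g(x-y)$; $1_X$ indicator, $\mu_X=1_X/|X|$; relative density of $A$ in $B$ is $|A|/|B|$; $\|F\|_\infty=\max|F|$. Bohr sets: for $\Gamma\subset\widehat G$, $\rho\ge0$, $\mathrm{Bohr}(\Gamma,\rho)=\{x: |\gamma(x)-1|\le\rho\ \forall\gamma\in\Gamma\}$, with $(\Gamma,\rho)$ part of the data, rank $\mathrm{rk}=|\Gamma|$; $B_\tau=\mathrm{Bohr}(\Gamma,\tau\rho)$. $B$ of rank $d$ is regular if $1-12d|\tau|\le |B_{1+\tau}|/|B|\le 1+12d|\tau|$ for $|\tau|\le 1/(12d)$. *)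

(* Finite abelian group = finZmodType (additive notation);
   characters take values in algC (algebraic complex numbers). *)
From HB Require Import structures.
From mathcomp Require Import all_boot all_order all_algebra all_field.
Set Implicit Arguments. Unset Strict Implicit. Unset Printing Implicit Defensive.
Import Order.TTheory GRing.Theory Num.Theory.
Local Open Scope ring_scope.

Section Defs.
Variable G : finZmodType.

Definition is_character (g : {ffun G -> algC}) : Prop :=
  g 0 = 1 /\ forall x y : G, g (x + y) = g x * g y.

Definition conv (f g : G -> algC) (x : G) : algC := \sum_(y : G) f y * g (x - y).

Definition ind (X : {set G}) (x : G) : algC := (x \in X)%:R.
Definition mu (X : {set G}) (x : G) : algC := ind X x / #|X|%:R.

Definition sup_norm (F : G -> algC) : algC := \big[Num.max/0]_(x : G) `|F x|.

Definition rel_density (X Y : {set G}) : algC := #|X|%:R / #|Y|%:R.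

Definition Bohr (Gam : seq {ffun G -> algC}) (rho : algC) : {set G} :=
  [set x : G | all (fun g : {ffun G -> algC} => `|g x - 1| <= rho) Gam].

Definition rk (Gam : seq {ffun G -> algC}) : nat := size (undup Gam).

Definition regular (Gam : seq {ffun G -> algC}) (rho : algC) : Prop :=
  forall t : algC, t \is Num.real ->
    `|t| <= 1 / (12 * (rk Gam)%:R) ->
    1 - 12 * (rk Gam)%:R * `|t| <= #|Bohr Gam ((1 + t) * rho)|%:R / #|Bohr Gam rho|%:R
    /\ #|Bohr Gam ((1 + t) * rho)|%:R / #|Bohr Gam rho|%:R <= 1 + 12 * (rk Gam)%:R * `|t|.
End Defs.

From HB Require Import structures.
From mathcomp Require Import all_boot all_order all_algebra all_field all_fingroup.
From mathcomp Require Import ring lra.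
From Stdlib Require Import FunctionalExtensionality.
Set Implicit Arguments. Unset Strict Implicit. Unset Printing Implicit Defensive.
Import Order.TTheory GRing.Theory Num.Theory.
Local Open Scope ring_scope.

(* Put F = 1_A * mu_T and M = ||F||_oo.  F is supported on B' = B_(1+tau), has
   total mass |A|, and mu_A * 1_A * mu_T * mu_T (x) = (F * F)(x) / |A|.  On the
   set S of z with z and x - z in B' one has (M - F z)(M - F (x - z)) >= 0, i.e.
   F z F (x - z) >= M (F z + F (x - z)) - M^2; summing over S, using that S
   contains x - B and that |B'| <= (1 + 12 rk tau) |B| by regularity, gives
   (F * F)(x) >= 2 M |A| - M^2 (1 + O(rk tau)) |B|.  If M < (1 + lam) |A| / |B|
   this lower bound exceeds (1 - 2 lam^2) |A|^2 / |B| once rk tau <= lam^2 / 240. *)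

Section Convolution.
Variable G : finZmodType.
Implicit Types (f g h : G -> algC) (X Y : {set G}).

Lemma convC f g : conv f g = conv g f.
Proof.
apply: functional_extensionality => x; rewrite /conv.
rewrite (reindex_inj (can_inj (subKr x))) /=.
by apply: eq_bigr => y _; rewrite subKr mulrC.
Qed.

Lemma convA f g h : conv (conv f g) h = conv f (conv g h).
Proof.
apply: functional_extensionality => x; rewrite /conv.
under eq_bigr do rewrite mulr_suml.
rewrite exchange_big /=; apply: eq_bigr => z _.
rewrite mulr_sumr (reindex_inj (addrI z)) /=.
by apply: eq_bigr => w _; rewrite addrC addKr mulrA opprD addrA.
Qed.

Lemma conv_divl f g (k : algC) :
  conv (fun y => f y / k) g = (fun x => conv f g x / k).
Proof.
apply: functional_extensionality => x.
by rewrite /conv mulr_suml; apply: eq_bigr => y _; rewrite mulrAC.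
Qed.

Lemma sum_conv f g : \sum_x conv f g x = (\sum_y f y) * \sum_z g z.
Proof.
rewrite /conv exchange_big mulr_suml; apply: eq_bigr => y _ /=.
rewrite -mulr_sumr (reindex_inj (addIr y)) /=.
by under eq_bigr do rewrite addrK.
Qed.

Lemma sum_ind X : \sum_x ind X x = #|X|%:R.
Proof.
rewrite -sumr_const [RHS]big_mkcond; apply: eq_bigr => x _.
by rewrite /ind; case: (x \in X).
Qed.

Lemma sum_mu X : X != set0 -> \sum_x mu X x = 1.
Proof.
by move=> X0; rewrite /mu -mulr_suml sum_ind divff // pnatr_eq0 -lt0n card_gt0.
Qed.

Lemma ind_ge0 X x : 0 <= ind X x.
Proof. exact: ler0n. Qed.

Lemma mu_ge0 X x : 0 <= mu X x.
Proof. by rewrite divr_ge0 ?ind_ge0 ?ler0n. Qed.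

Lemma conv_ge0 f g x :
  (forall y, 0 <= f y) -> (forall y, 0 <= g y) -> 0 <= conv f g x.
Proof. by move=> f0 g0; apply: sumr_ge0 => y _; rewrite mulr_ge0. Qed.

Lemma conv_ind_mu_eq0 X Y x :
  x \notin [set y + t | y in X, t in Y] -> conv (ind X) (mu Y) x = 0.
Proof.
move=> xXY; apply: big1 => y _; rewrite /mu /ind.
have [yX|] := boolP (y \in X); last by rewrite mul0r.
have [xyY|] := boolP (x - y \in Y); last by rewrite mul0r mulr0.
by move: xXY; rewrite -[x](subrKC y) imset2_f.
Qed.

Lemma rel_density_gt0 X Y : 0 < rel_density X Y -> (0 < #|X|)%N /\ (0 < #|Y|)%N.
Proof.
rewrite /rel_density !lt0n; case: (#|X| =P 0) => [->|_]; first by rewrite mul0r ltxx.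
by case: (#|Y| =P 0) => [->|//]; rewrite invr0 mulr0 ltxx.
Qed.

Lemma conv_mu_ind_mu_mu X Y :
  conv (conv (conv (mu X) (ind X)) (mu Y)) (mu Y)
  = (fun x => conv (conv (ind X) (mu Y)) (conv (ind X) (mu Y)) x / #|X|%:R).
Proof.
have -> : conv (conv (conv (mu X) (ind X)) (mu Y)) (mu Y)
    = conv (conv (mu X) (mu Y)) (conv (ind X) (mu Y)).
  by rewrite -[in RHS]convA; congr conv; rewrite !convA (convC (ind X)).
by rewrite [mu X]/mu (conv_divl (ind X)) (conv_divl (conv (ind X) (mu Y))).
Qed.

End Convolution.

Section BohrSets.
Variable G : finZmodType.

Lemma character_norm1 (g : {ffun G -> algC}) y : is_character g -> `|g y| = 1.
Proof.
move=> [g0 gD].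
have gMn n : g (y *+ n) = g y ^+ n.
  by elim: n => [|n IHn]; rewrite ?mulr0n ?expr0 // mulrS gD IHn exprS.
have yn : y *+ #[y]%g = 0 by rewrite -FinRing.zmodXgE expg_order.
apply/eqP; rewrite -(pexpr_eq1 (order_gt0 y)) ?normr_ge0 //.
by rewrite -normrX -gMn yn g0 normr1.
Qed.

Variable Gam : seq {ffun G -> algC}.
Hypothesis Gam_char : forall g, g \in Gam -> is_character g.

Lemma Bohr_add r1 r2 y z :
  y \in Bohr Gam r1 -> z \in Bohr Gam r2 -> y + z \in Bohr Gam (r1 + r2).
Proof.
rewrite !inE => /allP yB /allP zB; apply/allP => g gG /=.
have [_ gD] := Gam_char gG.
have -> : g (y + z) - 1 = g y * (g z - 1) + (g y - 1) by rewrite gD; ring.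
rewrite (le_trans (ler_normD _ _)) // normrM (character_norm1 y (Gam_char gG)).
by rewrite mul1r addrC lerD ?yB ?zB.
Qed.

Lemma Bohr_opp r y : y \in Bohr Gam r -> - y \in Bohr Gam r.
Proof.
rewrite !inE => /allP yB; apply/allP => g gG /=.
have [g0 gD] := Gam_char gG.
have -> : g (- y) - 1 = g (- y) * (1 - g y) by rewrite mulrBr -gD addNr g0 mulr1.
by rewrite normrM (character_norm1 (- y) (Gam_char gG)) mul1r distrC yB.
Qed.

Lemma le_Bohr r1 r2 : r1 <= r2 -> Bohr Gam r1 \subset Bohr Gam r2.
Proof.
move=> r12; apply/subsetP => y; rewrite !inE => /allP yB.
by apply/allP => g gG /=; rewrite (le_trans (yB _ gG)).
Qed.

Lemma Bohr_add_dilate r tau y z :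
  y \in Bohr Gam r -> z \in Bohr Gam (tau * r) -> y + z \in Bohr Gam ((1 + tau) * r).
Proof. by move=> yB zB; rewrite mulrDl mul1r Bohr_add. Qed.

Lemma conv_ind_mu_Bohr_eq0 (A T : {set G}) r tau z :
  A \subset Bohr Gam r -> T \subset Bohr Gam (tau * r) ->
  z \notin Bohr Gam ((1 + tau) * r) -> conv (ind A) (mu T) z = 0.
Proof.
move=> AB TB zB; apply: conv_ind_mu_eq0; apply: contra zB => /imset2P[y t yA tT ->].
by rewrite Bohr_add_dilate ?(subsetP AB) ?(subsetP TB).
Qed.

(* z |-> x - z injects Bohr r into this set. *)
Lemma card_Bohr_le_sym r tau x :
  0 <= r -> 0 <= tau -> x \in Bohr Gam (tau * r) ->
  #|Bohr Gam r|%:R <= #|[set z in Bohr Gam ((1 + tau) * r)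
                       | x - z \in Bohr Gam ((1 + tau) * r)]|%:R :> algC.
Proof.
move=> r0 tau0 xB; rewrite ler_nat -(card_imset _ (can_inj (subKr x))).
have BB' : Bohr Gam r \subset Bohr Gam ((1 + tau) * r).
  by apply: le_Bohr; rewrite ler_peMl // lerDl.
apply/subset_leq_card/subsetP => _ /imsetP[z zB ->].
rewrite inE subKr (subsetP BB' z zB) andbT addrC.
exact: Bohr_add_dilate (Bohr_opp zB) xB.
Qed.

End BohrSets.

Lemma Bohr_nil (G : finZmodType) r : Bohr [::] r = [set: G].
Proof. by apply/setP => y; rewrite !inE. Qed.

Lemma regular_card_Bohr_le (G : finZmodType) (Gam : seq {ffun G -> algC}) rho tau :
  regular Gam rho -> (0 < #|Bohr Gam rho|)%N ->
  0 <= tau -> 12 * (rk Gam)%:R * tau <= 1 ->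
  #|Bohr Gam ((1 + tau) * rho)|%:R <= (1 + 12 * (rk Gam)%:R * tau) * #|Bohr Gam rho|%:R.
Proof.
move=> Greg B0 tau0 tau_small.
have [rk0|rk_gt0] := posnP (rk Gam).
  rewrite rk0 mulr0 mul0r addr0 mul1r.
  have -> : Gam = [::] by apply/undup_nil/size0nil.
  by rewrite !Bohr_nil.
have [|_] := Greg tau (ger0_real tau0).
  by rewrite ger0_norm // ler_pdivlMr ?mulr_gt0 ?ltr0n // mulrC.
by rewrite ger0_norm // ler_pdivrMr ?ltr0n.
Qed.

Section SupNorm.
Variable G : finZmodType.
Implicit Types (F : G -> algC) (Y : {set G}).

Lemma norm_le_sup_norm F x : `|F x| <= sup_norm F.
Proof.
rewrite /sup_norm; elim: (index_enum G) (mem_index_enum x) => // y r IHr.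
rewrite big_cons inE comparable_le_max; last first.
  by rewrite real_comparable ?normr_real ?bigmax_real // => z _; apply: normr_real.
by case/predU1P => [->|/IHr ->]; rewrite ?lexx ?orbT.
Qed.

Lemma sup_norm_ge0 F : 0 <= sup_norm F.
Proof. exact: le_trans (normr_ge0 (F 0)) (norm_le_sup_norm F 0). Qed.

Lemma le_sup_norm F x : 0 <= F x -> F x <= sup_norm F.
Proof. by move=> F0; rewrite -(ger0_norm F0) norm_le_sup_norm. Qed.

Lemma sum_le_mul_card F Y M :
  (forall x, F x <= M) -> (forall x, x \notin Y -> F x = 0) ->
  \sum_x F x <= M * #|Y|%:R.
Proof.
move=> FM FY; rewrite -(sum_ind Y) mulr_sumr; apply: ler_sum => x _.
by rewrite /ind; case: (boolP (x \in Y)) => [_|/FY ->]; rewrite ?mulr1 ?mulr0.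
Qed.

Lemma conv_self_ge F Y M x :
  (forall z, 0 <= F z <= M) -> (forall z, z \notin Y -> F z = 0) ->
  2 * M * \sum_z F z - M ^+ 2 * (2 * #|Y|%:R - #|[set z in Y | x - z \in Y]|%:R)
    <= conv F F x.
Proof.
move=> FM FY; set S := [set z in Y | x - z \in Y].
have F0 z : 0 <= F z by have /andP[] := FM z.
have Fle z : F z <= M by have /andP[] := FM z.
have M0 : 0 <= M := le_trans (F0 0) (Fle 0).
have sum_out : \sum_z F z <= \sum_z ind S z * F z + M * (#|Y|%:R - #|S|%:R).
  rewrite -sum_ind -sum_ind -sumrB mulr_sumr -big_split /=.
  apply: ler_sum => z _; rewrite /ind; case zS: (z \in S).
    by move: zS; rewrite inE => /andP[-> _]; rewrite mul1r subrr mulr0 addr0.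
  rewrite mul0r add0r subr0.
  by case: (boolP (z \in Y)) => [_|/FY ->]; rewrite ?mulr1 ?mulr0.
have sum_refl : \sum_z ind S z * F (x - z) = \sum_z ind S z * F z.
  rewrite (reindex_inj (can_inj (subKr x))) /=; apply: eq_bigr => z _.
  by rewrite subKr /ind !inE subKr andbC.
have pointwise z :
    ind S z * (M * F z + M * F (x - z) - M ^+ 2) <= F z * F (x - z).
  rewrite /ind; case: (z \in S); last by rewrite mul0r mulr_ge0.
  rewrite mul1r -subr_ge0.
  have -> : F z * F (x - z) - (M * F z + M * F (x - z) - M ^+ 2)
      = (M - F z) * (M - F (x - z)) by ring.
  by rewrite mulr_ge0 ?subr_ge0.
apply: le_trans (ler_sum _ (fun z _ => pointwise z)).
have -> : \sum_z ind S z * (M * F z + M * F (x - z) - M ^+ 2)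
    = 2 * M * \sum_z ind S z * F z - M ^+ 2 * #|S|%:R.
  transitivity (\sum_z (M * (ind S z * F z) + M * (ind S z * F (x - z))
                        - M ^+ 2 * ind S z)).
    by apply: eq_bigr => z _; ring.
  rewrite sumrB big_split /= -!mulr_sumr sum_refl sum_ind; ring.
move: sum_out; set sF := \sum_z F z; set sSF := \sum_z _ => sum_out.
rewrite -subr_ge0.
have -> : 2 * M * sSF - M ^+ 2 * #|S|%:R - (2 * M * sF - M ^+ 2 * (2 * #|Y|%:R - #|S|%:R))
    = 2 * M * (sSF + M * (#|Y|%:R - #|S|%:R) - sF) by ring.
by rewrite mulr_ge0 ?subr_ge0 ?mulr_ge0.
Qed.
End SupNorm.

Lemma quadratic_density_bound (R : realFieldType) (a u lam E : R) :
  0 < a -> 0 <= lam -> lam <= 1 -> 0 <= E -> 20 * E <= lam ^+ 2 ->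
  a <= (1 + E) * u ->
  2 * u * a - (1 + 2 * E) * u ^+ 2 <= (1 - 2 * lam ^+ 2) * a ^+ 2 ->
  (1 + lam) * a <= u.
Proof.
move=> a0 lam0 lam1 E0 Elam aU quad; rewrite leNgt; apply/negP => ult.
have u0 : 0 < u by nra.
set d := u - a.
have d_lt : d < lam * a by rewrite /d; lra.
have d_ge : - (2 * E * a) <= d by rewrite /d; nra.
have key : 2 * lam ^+ 2 * a ^+ 2 <= d ^+ 2 + 2 * E * u ^+ 2 by rewrite /d; nra.
have [lam_eq0|lam_neq0] := eqVneq lam 0.
  by move: Elam d_lt d_ge; rewrite lam_eq0; nra.
have lam_gt0 : 0 < lam by rewrite lt_def lam_neq0.
have E_lt : E < lam by nra.
have d_gt : - (lam * a) < d by nra.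
have d2 : d ^+ 2 < lam ^+ 2 * a ^+ 2.
  have : 0 < (lam * a - d) * (lam * a + d) by apply: mulr_gt0; lra.
  lra.
have u2 : u ^+ 2 <= 4 * a ^+ 2.
  have : 0 <= (2 * a - u) * (2 * a + u) by apply: mulr_ge0; nra.
  lra.
nra.
Qed.

Lemma density_increment_bound (R : realFieldType) (a b b' s M X lam E : R) :
  0 < a -> 0 < b -> 0 <= M -> 0 <= lam -> lam <= 1 -> 0 <= E ->
  20 * E <= lam ^+ 2 -> b <= s -> b' <= (1 + E) * b -> a <= M * b' ->
  2 * M * a - M ^+ 2 * (2 * b' - s) <= X ->
  X / a <= (1 - 2 * lam ^+ 2) * (a / b) ->
  (1 + lam) * (a / b) <= M.
Proof.
move=> a0 b0 M0 lam0 lam1 E0 Elam bs b'b aM lowX upX.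
have upXb : X * b <= (1 - 2 * lam ^+ 2) * a ^+ 2.
  have := ler_wpM2r (ltW (mulr_gt0 a0 b0)) upX.
  have -> : X / a * (a * b) = X * b by field; rewrite gt_eqF.
  by have -> : (1 - 2 * lam ^+ 2) * (a / b) * (a * b) = (1 - 2 * lam ^+ 2) * a ^+ 2
    by field; rewrite gt_eqF.
rewrite mulrA ler_pdivrMr //.
apply: quadratic_density_bound Elam _ _ => //; first by nra.
have M2 : 0 <= M ^+ 2 by rewrite sqr_ge0.
have : (2 * M * a - M ^+ 2 * (1 + 2 * E) * b) * b <= X * b by rewrite ler_pM2r //; nra.
nra.
Qed.

(* algC is not totally ordered; the bound is transported from its real
   subfield algR, where lra and nra apply. *)
Lemma density_increment_boundC (a b b' s M X lam E : algC) :
  0 < a -> 0 < b -> 0 <= M -> 0 <= lam -> lam <= 1 -> 0 <= E ->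
  20 * E <= lam ^+ 2 -> b <= s -> b' <= (1 + E) * b -> a <= M * b' ->
  2 * M * a - M ^+ 2 * (2 * b' - s) <= X ->
  X / a <= (1 - 2 * lam ^+ 2) * (a / b) ->
  (1 + lam) * (a / b) <= M.
Proof.
move=> a0 b0 M0 lam0 lam1 E0 Elam bs b'b aM lowX upX.
have aR := gtr0_real a0; have bR := gtr0_real b0; have MR := ger0_real M0.
have lamR := ger0_real lam0; have ER := ger0_real E0.
have b'R : b' \is Creal by rewrite (ler_real b'b) rpredM ?rpredD ?rpred1.
have sR : s \is Creal by rewrite -(ler_real bs).
have XR : X \is Creal by rewrite -(ler_real lowX) !(rpredB, rpredM, rpredX, rpred_nat).
have valE (p q : algR) : (p <= q) = (algRval p <= algRval q) by [].
have valEs (p q : algR) : (p < q) = (algRval p < algRval q) by [].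
move: (@density_increment_bound _ (in_algR aR) (in_algR bR) (in_algR b'R)
  (in_algR sR) (in_algR MR) (in_algR XR) (in_algR lamR) (in_algR ER)).
rewrite !valE !valEs /=.
rewrite ?(rmorphB, rmorphM, rmorphD, rmorphX, rmorph1, rmorph0, rmorph_nat, fmorphV) /=.
exact.
Qed.

Theorem lemma10 : exists c : algC, 0 < c /\
  forall (G : finZmodType) (Gam : seq {ffun G -> algC}) (rho : algC)
         (A T : {set G}) (lam tau : algC) (x : G),
    (forall g, g \in Gam -> is_character g) ->
    0 <= rho ->
    regular Gam rho ->
    A \subset Bohr Gam rho ->
    0 < rel_density A (Bohr Gam rho) ->
    0 <= lam -> lam <= 1 ->
    0 <= tau -> tau * (rk Gam)%:R <= c * lam ^+ 2 ->
    T != set0 -> T \subset Bohr Gam (tau * rho) ->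
    x \in Bohr Gam (tau * rho) ->
    conv (conv (conv (mu A) (ind A)) (mu T)) (mu T) x
      <= (1 - 2 * lam ^+ 2) * rel_density A (Bohr Gam rho) ->
    (1 + lam) * rel_density A (Bohr Gam rho) <= sup_norm (conv (ind A) (mu T)).
Proof.
exists (240^-1); split; first by rewrite invr_gt0 ltr0n.
move=> G Gam rho A T lam tau x Gam_char rho0 Greg AB dens lam0 lam1 tau0 tau_small
  T0 TB xB q_small.
have [A0 B0] := rel_density_gt0 dens.
set F := conv (ind A) (mu T).
have F_bounds z : 0 <= F z <= sup_norm F.
  have F0 : 0 <= F z by rewrite conv_ge0 // => y; rewrite ?ind_ge0 ?mu_ge0.
  by rewrite F0 le_sup_norm.
have sumF : \sum_z F z = #|A|%:R by rewrite sum_conv sum_ind sum_mu // mulr1.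
set E := 12 * (rk Gam)%:R * tau.
have E_small : 20 * E <= lam ^+ 2.
  have -> : 20 * E = 240 * (tau * (rk Gam)%:R) by rewrite /E; ring.
  by rewrite -ler_pdivlMl ?ltr0n // mulrC.
have E0 : 0 <= E by rewrite !mulr_ge0 ?ler0n.
set B' := Bohr Gam ((1 + tau) * rho).
apply: (density_increment_boundC (b' := #|B'|%:R) (s := #|[set z in B' | x - z \in B']|%:R)
          (X := conv F F x) (E := E)) => //;
  rewrite ?ltr0n ?sup_norm_ge0 ?card_Bohr_le_sym //.
- apply: regular_card_Bohr_le => //.
  rewrite -/E (le_trans _ (le_trans E_small (exprn_ile1 _ lam0 lam1))) //.
  by rewrite ler_peMl // ler1n.
- rewrite -sumF sum_le_mul_card // => [z|z]; first by have /andP[] := F_bounds z.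
  exact: conv_ind_mu_Bohr_eq0.
- by rewrite -sumF conv_self_ge // => z; apply: conv_ind_mu_Bohr_eq0.
- by move: q_small; rewrite conv_mu_ind_mu_mu.
Qed.
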